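(* Let $W$ be a real $N\times N$ matrix with singular value decomposition $W=U\Sigma V^\top$ and rank $n$, where $1\le n<N$, and let $V_n$ be the $N\times n$ matrix of the first $n$ right singular vectors of $W$. Let $g:\mathbb{R}^N\times\mathbb{R}^N\to\mathbb{R}^N$ be continuously differentiable and suppose that its Jacobian with respect to the first argument satisfies $J_x(x,y)=\big(\partial g_i/\partial x_j\big)_{i,j}=aI$ for all $(x,y)$, for some real constant $a$. Let $M=V_n^\top$ and consider the complete dynamics $\dot x=g(x,Wx)$ and reduced dynamics $\dot X=Mg(M^+X,WM^+X)$. Then the alignment error \[\mathcal{E}(x)=\frac{1}{\sqrt n}\big\|Mg(x,Wx)-Mg(M^+Mx,WM^+Mx)\big\|\] vanishes for all $x\in\mathbb{R}^N$.
   Context: $\|\cdot\|$ is the Euclidean norm and $M^+$ the Moore–Penrose pseudoinverse of $M$. *)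

From HB Require Import structures.
From mathcomp Require Import all_boot all_order all_algebra.
From mathcomp Require Import all_classical all_reals all_analysis.
Set Implicit Arguments. Unset Strict Implicit. Unset Printing Implicit Defensive.
Import Order.TTheory GRing.Theory Num.Theory.
Import numFieldNormedType.Exports.
Local Open Scope ring_scope.

Definition enorm (R : realType) (m : nat) (v : 'cV[R]_m) : R :=
  Num.sqrt (\sum_(i < m) v i 0 ^+ 2).

Definition is_MP_pinv (R : realType) (m k : nat) (A : 'M[R]_(m, k)) (B : 'M[R]_(k, m)) : Prop :=
  [/\ A *m B *m A = A, B *m A *m B = B, (A *m B)^T = A *m B & (B *m A)^T = B *m A].

Definition is_SVD (R : realType) (N : nat) (W U V : 'M[R]_N) (s : 'rV[R]_N) : Prop :=
  [/\ U^T *m U = 1%:M, V^T *m V = 1%:M,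
      (forall i, 0 <= s 0 i),
      (forall i j : 'I_N, (i <= j)%N -> s 0 j <= s 0 i)
    & W = U *m diag_mx s *m V^T].

Definition jacobian_col (R : realType) (N : nat) (f : 'cV[R]_N -> 'cV[R]_N) (x : 'cV[R]_N) : 'M[R]_N :=
  \matrix_(i < N, j < N) ('D_(delta_mx j 0) f x) i 0.

(* Continuously differentiable map R^N x R^N -> R^N: differentiable everywhere
   with continuous derivative (continuity of every directional derivative,
   equivalent to continuity of the differential in finite dimension). *)
Definition C1 (R : realType) (N : nat) (G : 'cV[R]_N * 'cV[R]_N -> 'cV[R]_N) : Prop :=
  (forall p, differentiable G p) /\ (forall v, continuous (fun p => 'D_v G p)).

From HB Require Import structures.
From mathcomp Require Import all_boot all_order all_algebra.
From mathcomp Require Import all_classical all_reals all_analysis.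
Import Order.TTheory GRing.Theory Num.Theory.
Import numFieldNormedType.Exports.
Set Implicit Arguments. Unset Strict Implicit. Unset Printing Implicit Defensive.
Local Open Scope ring_scope.

(* By the rank hypothesis the singular values beyond the n-th vanish, so
   W = U Sigma V^T factors as (U Sigma P_n) V_n^T through M = V_n^T; as M^+ M
   is the identity on the row space of M, W M^+ M = W and both evaluations of g
   share the second argument W x.  A constant Jacobian a I in the first argument
   makes z |-> g z y affine with linear part a I, so the error vector is
   a M (x - M^+ M x), which vanishes because M M^+ M = M. *)

Lemma is_derive_line (R : realType) (V W : normedModType R) (F : V -> W)
    (d x : V) (t : R) (l : W) :
  is_derive (t *: d + x) d F l -> is_derive t 1 (fun s => F (s *: d + x)) l.
Proof.
have quotE : (fun h : R => h^-1 *: (((fun s => F (s *: d + x)) \o shift t) (h *: 1)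
                                  - F (t *: d + x))) =
          (fun h : R => h^-1 *: ((F \o shift (t *: d + x)) (h *: d) - F (t *: d + x))).
  by apply: funext => h /=; rewrite /shift /= [h *: 1]mulr1 scalerDl addrA.
by case=> dF DF; apply: DeriveDef; rewrite /derivable /derive quotE.
Qed.

Lemma is_derive0_cst_mx (R : realType) (V : normedModType R) (m k : nat)
    (F : V -> 'M[R]_(m, k)) :
  (forall p v, is_derive p v F 0) -> forall x y, F x = F y.
Proof.
move=> F'0 x y; pose line s := F (s *: (x - y) + y).
suff : line 1 = line 0 by rewrite /line scale1r subrK scale0r add0r.
apply/matrixP => i j; apply: (@is_derive_0_is_cst _ (fun s => line s i j)) => t.
have [dline Dline] := is_derive_line (F'0 (t *: (x - y) + y) (x - y)).
apply: DeriveDef; first by move/derivable_mxP: dline; apply.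
by have := congr1 (fun A : 'M[R]_(m, k) => A i j) (derive_mx dline); rewrite Dline !mxE.
Qed.

Lemma derive_scalar_jacobian (R : realType) (N : nat) (f : 'cV[R]_N -> 'cV[R]_N)
    (a : R) (p : 'cV[R]_N) :
  differentiable f p -> jacobian_col f p = a%:M -> forall v, 'D_v f p = a *: v.
Proof.
move=> df Jf v; rewrite deriveE // [in LHS](matrix_sum_delta v) linear_sum.
rewrite [in RHS](matrix_sum_delta v) scaler_sumr; apply: eq_bigr => i _.
rewrite !big_ord1 linearZ /= -deriveE // scalerA mulrC -scalerA.
congr (_ *: _); apply/matrixP => k l; rewrite ord1.
have := congr1 (fun A : 'M[R]_N => A k i) Jf; rewrite !mxE ord1 => ->.
by rewrite andbT mulr_natr.
Qed.

Lemma scalar_jacobian_affine (R : realType) (N : nat) (f : 'cV[R]_N -> 'cV[R]_N)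
    (a : R) :
  (forall p, differentiable f p) -> (forall p, jacobian_col f p = a%:M) ->
  forall x y, f x - f y = a *: (x - y).
Proof.
move=> df Jf x y.
have F'0 p v : is_derive p v (fun z => f z - a *: z) 0.
  rewrite -(subrr (a *: v)) -{1}(derive_scalar_jacobian (df p) (Jf p) v).
  by apply: is_deriveB; apply/derivableP/diff_derivable.
move/eqP: (is_derive0_cst_mx F'0 x y); rewrite subr_eq => /eqP->.
by rewrite -addrA addrC addrA subrK scalerBr.
Qed.

Lemma differentiable_slice_fst (R : realType) (V1 V2 W : normedModType R)
    (G : V1 * V2 -> W) (y : V2) :
  (forall p, differentiable G p) -> forall z, differentiable (fun z => G (z, y)) z.
Proof. by move=> dG z; apply: differentiable_comp; [apply: differentiable_pair|]. Qed.

Lemma enorm0 (R : realType) (m : nat) : enorm (0 : 'cV[R]_m) = 0.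
Proof. by rewrite /enorm big1 ?sqrtr0 // => i _; rewrite mxE expr0n. Qed.

Lemma colsub_widen_pid (R : pzSemiRingType) (m n N : nat) (le_nN : (n <= N)%N)
    (A : 'M[R]_(m, N)) :
  colsub (widen_ord le_nN) A = A *m pid_mx n.
Proof.
have -> : (pid_mx n : 'M[R]_(N, n)) = pid_mx N.
  by rewrite -(pid_mx_minh _ N n N) (minn_idPl le_nN).
by rewrite (pid_mxEcol _ le_nN) mulmx_colsub mulmx1.
Qed.

Lemma mul_diag_mx_pid (R : pzSemiRingType) (N n : nat) (s : 'rV[R]_N) :
  (forall i : 'I_N, (n <= i)%N -> s 0 i = 0) -> diag_mx s *m pid_mx n = diag_mx s.
Proof.
move=> s_tail; apply/matrixP => i j; rewrite mul_diag_mx !mxE val_eqE.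
have [_|_] := eqVneq i j; last by rewrite mulr0.
by case: (ltnP i n) => [_|/s_tail->]; rewrite /= ?mulr1 ?mul0r.
Qed.

Lemma pinv_proj_submx (F : fieldType) (m n k : nat) (M : 'M[F]_(n, k))
    (Mp : 'M[F]_(k, n)) (A : 'M[F]_(m, k)) :
  M *m Mp *m M = M -> (A <= M)%MS -> A *m Mp *m M = A.
Proof. by move=> MMpM /submxP[D ->]; rewrite -!mulmxA (mulmxA M) MMpM. Qed.

Lemma rank_diag_mx_ge (F : fieldType) (N m : nat) (s : 'rV[F]_N) :
  (m <= N)%N -> (forall k : 'I_N, (k < m)%N -> s 0 k != 0) ->
  (m <= \rank (diag_mx s))%N.
Proof.
move=> le_mN s_head.
pose t : 'rV[F]_N := \row_k (if (k < m)%N then (s 0 k)^-1 else 0).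
have <- : \rank (diag_mx t *m diag_mx s) = m.
  rewrite -(rank_pid_mx F le_mN le_mN); congr (\rank _).
  apply/matrixP => i j; rewrite mul_diag_mx !mxE val_eqE.
  have [_|_] := eqVneq i j; last by rewrite mulr0.
  by case: ifP => [im|_]; rewrite /= ?mulVf ?s_head ?mul0r.
exact: mxrankM_maxr.
Qed.

Section SVD.
Variables (R : realType) (N : nat) (W U V : 'M[R]_N) (s : 'rV[R]_N).
Hypothesis svdW : is_SVD W U V s.

Lemma svd_diag : diag_mx s = U^T *m W *m V.
Proof.
case: svdW => UU VV _ _ ->.
by rewrite !mulmxA UU mul1mx -!mulmxA VV mulmx1.
Qed.

Lemma svd_sv_eq0 (i : 'I_N) : (\rank W <= i)%N -> s 0 i = 0.
Proof.
move=> rWi; case: (svdW) => _ _ s_ge0 s_sorted _.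
have rW_lt : (\rank W < N)%N by apply: leq_ltn_trans rWi _.
pose r : 'I_N := Ordinal rW_lt.
suff s_r : s 0 r = 0.
  by apply/eqP; rewrite eq_le s_ge0 andbT -s_r; exact: s_sorted.
apply/eqP; rewrite eq_le s_ge0 andbT leNgt; apply/negP => s_r_gt0.
have : (\rank W < \rank (diag_mx s))%N.
  apply: rank_diag_mx_ge => // k kr; rewrite gt_eqF //.
  by apply: lt_le_trans s_r_gt0 _; apply: s_sorted.
rewrite svd_diag ltnNge => /negP; apply.
by apply: leq_trans (mxrankM_maxl _ _) _; exact: mxrankM_maxr.
Qed.

Lemma svd_row_submx (n : nat) (le_nN : (n <= N)%N) :
  \rank W = n -> (W <= (colsub (widen_ord le_nN) V)^T)%MS.
Proof.
move=> rW; apply/submxP.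
exists (U *m diag_mx s *m pid_mx n).
have s_tail (i : 'I_N) : (n <= i)%N -> s 0 i = 0 by rewrite -rW; exact: svd_sv_eq0.
case: (svdW) => _ _ _ _ {1}->.
rewrite colsub_widen_pid trmx_mul tr_pid_mx -!mulmxA (mulmxA (pid_mx n)).
by rewrite pid_mx_id // (mulmxA (diag_mx s)) mul_diag_mx_pid.
Qed.

End SVD.

Theorem corollaryS61 (R : realType) (N n : nat) (hn1 : (1 <= n)%N) (hnN : (n < N)%N)
  (W U V : 'M[R]_N) (s : 'rV[R]_N)
  (hsvd : is_SVD W U V s) (hrank : \rank W = n)
  (g : 'cV[R]_N -> 'cV[R]_N -> 'cV[R]_N) (a : R)
  (hC1 : C1 (fun p : 'cV[R]_N * 'cV[R]_N => g p.1 p.2))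
  (hJ : forall x y : 'cV[R]_N, jacobian_col (fun z : 'cV[R]_N => g z y) x = a%:M)
  (Mp : 'M[R]_(N, n)) :
  let Vn : 'M[R]_(N, n) := colsub (fun j : 'I_n => widen_ord (ltnW hnN) j) V in
  let M : 'M[R]_(n, N) := Vn^T in
  is_MP_pinv M Mp ->
  forall x : 'cV[R]_N,
    (Num.sqrt (n%:R))^-1 *
      enorm (M *m g x (W *m x) - M *m g (Mp *m M *m x) (W *m Mp *m M *m x)) = 0.
Proof.
move=> Vn M [MMpM _ _ _] x.
have WM : (W <= M)%MS by exact: (svd_row_submx hsvd (ltnW hnN) hrank).
have WMpM : W *m Mp *m M = W by exact: pinv_proj_submx MMpM WM.
have g_affine : g x (W *m x) - g (Mp *m M *m x) (W *m x) = a *: (x - Mp *m M *m x).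
  apply: scalar_jacobian_affine (fun p => hJ p (W *m x)) _ _ => p.
  exact: differentiable_slice_fst hC1.1 p.
have M_ker : M *m (x - Mp *m M *m x) = 0 by rewrite mulmxBr !mulmxA MMpM subrr.
by rewrite WMpM -mulmxBr g_affine -scalemxAr M_ker scaler0 enorm0 mulr0.
Qed.
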